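(* Let $n\ge1$ and on $\mathbb{D}^n$ (coordinates $\alpha_0,\dots,\alpha_{n-1}$) use the Poisson bracket described in the context. Let $\Phi_n,\Psi_n$ be the monic first and second kind orthogonal polynomials on the unit circle and $\Phi_n^*,\Psi_n^*$ their reversed polynomials. Then for all $z,w$: \[ \{\Phi_n(z),\Phi_n(w)\}=\{\Psi_n(z),\Psi_n(w)\}=\{\Phi_n^*(z),\Phi_n^*(w)\}=\{\Psi_n^*(z),\Psi_n^*(w)\}=0, \] \[ \{\Phi_n^*(z),\Psi_n^*(w)\}=-\frac{i}{2}\Bigl[\bigl(\Phi_n^*(z)\Psi_n^*(w)-\Psi_n^*(z)\Phi_n^*(w)\bigr)\frac{z+w}{z-w}-\Phi_n^*(z)\Phi_n^*(w)+\Psi_n^*(z)\Psi_n^*(w)\Bigr], \] \[ \{\Phi_n(z),\Psi_n(w)\}=-\frac{i}{2}\Bigl[\bigl(\Phi_n(z)\Psi_n(w)-\Psi_n(z)\Phi_n(w)\bigr)\frac{z+w}{z-w}+\Phi_n(z)\Phi_n(w)-\Psi_n(z)\Psi_n(w)\Bigr]. \]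
   Context: Let $\rho_j=(1-|\alpha_j|^2)^{1/2}$; the Poisson bracket is $\{f,g\}=\sum_{j=0}^{n-1}i\rho_j^2\bigl(\frac{\partial f}{\partial\bar\alpha_j}\frac{\partial g}{\partial\alpha_j}-\frac{\partial f}{\partial\alpha_j}\frac{\partial g}{\partial\bar\alpha_j}\bigr)$ (Wirtinger derivatives), i.e. $\{\alpha_j,\alpha_k\}=0$, $\{\alpha_j,\bar\alpha_k\}=-i\rho_j^2\delta_{jk}$; $z,w$ are held fixed. $\Phi_0=1$, $\Phi_{k+1}(z)=z\Phi_k(z)-\bar\alpha_k\Phi_k^*(z)$, $\Phi_k^*(z)=z^k\overline{\Phi_k(1/\bar z)}$; $\Psi_k$ satisfies the same recursion with each $\alpha_j$ replaced by $-\alpha_j$, and $\Psi_k^*(z)=z^k\overline{\Psi_k(1/\bar z)}$. The identities are identities of polynomials in $z,w$. *)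

From HB Require Import structures.
From mathcomp Require Import all_boot all_order all_algebra.
From mathcomp Require Import mpoly.
Set Implicit Arguments. Unset Strict Implicit. Unset Printing Implicit Defensive.
Import Order.TTheory GRing.Theory Num.Theory.
Local Open Scope ring_scope.

(* Formal setting: the coordinates alpha_0..alpha_{n-1} and their conjugates
   abar_0..abar_{n-1} are independent indeterminates of {mpoly C[n + n]}:
   alpha_j = 'X_(lshift n j), abar_j = 'X_(rshift n j).
   Wirtinger derivatives d/dalpha_j, d/dabar_j of polynomials in (alpha, abar)
   are the formal partial derivatives mderiv. *)
Section OPUC.
Variables (C : numClosedFieldType) (n : nat).

Local Notation M := {mpoly C[n + n]}.

Definition alpha (j : 'I_n) : M := 'X_(lshift n j).
Definition alphabar (j : 'I_n) : M := 'X_(rshift n j).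

Definition rho2 (j : 'I_n) : M := 1 - alpha j * alphabar j.

(* abar_k as a function of a natural index (only k < n is ever used). *)
Definition alphabar_nat (k : nat) : M :=
  match insub k with Some j => alphabar j | None => 0 end.

(* complex conjugation on M: conjugate coefficients and swap alpha_j <-> abar_j *)
Definition swap_idx (i : 'I_(n + n)) : 'I_(n + n) :=
  match split i with inl j => rshift n j | inr j => lshift n j end.
Definition mconj (p : M) : M :=
  mmap (fun c : C => (Num.conj c)%:MP) (fun i => 'X_(swap_idx i)) p.

(* reversed polynomial of degree k: p^*(z) = z^k * conj(p(1/conj z)) *)
Definition revstar (k : nat) (p : {poly M}) : {poly M} :=
  \poly_(i < k.+1) mconj p`_(k - i).

(* Szego recursion with Verblunsky coefficients s*alpha_k (s = 1 first kind,
   s = -1 second kind): P_{k+1} = z P_k - conj(s alpha_k) P_k^*. *)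
Fixpoint opuc (s : C) (k : nat) : {poly M} :=
  match k with
  | 0 => 1
  | k'.+1 => 'X * opuc s k' - (s%:MP * alphabar_nat k')%:P * revstar k' (opuc s k')
  end.

Definition Phi k := opuc 1 k.
Definition Psi k := opuc (-1) k.
Definition Phistar k := revstar k (Phi k).
Definition Psistar k := revstar k (Psi k).

Definition ev (p : {poly M}) (z : C) : M := p.[z%:MP].

Definition pbracket (f g : M) : M :=
  \sum_(j < n) ('i%:MP * rho2 j *
     (mderiv (rshift n j) f * mderiv (lshift n j) g
      - mderiv (lshift n j) f * mderiv (rshift n j) g)).

End OPUC.

From HB Require Import structures.
From mathcomp Require Import all_boot all_order all_algebra.
From mathcomp Require Import mpoly.
From mathcomp Require Import ring zify.
From mathcomp.real_closed Require Import mxtens.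
Set Implicit Arguments. Unset Strict Implicit. Unset Printing Implicit Defensive.
Import Order.TTheory GRing.Theory Num.Theory.
Local Open Scope ring_scope.

(* Write A_k(z) = [[z, -abar_k], [-alpha_k z, 1]] for one step of the Szego recursion,
   so that (Phi_{k+1}, Phi*_{k+1}) = A_k(z) (Phi_k, Phi*_k); flipping the sign of every
   alpha_j conjugates A_k(z) by diag(1, -1), so (Psi_{k+1}, -Psi*_{k+1}) = A_k(z) (Psi_k, -Psi*_k).
   Hence Phi_n, Phi*_n, Psi_n and Psi*_n are sums and differences of the entries of the
   transfer matrix T_n(z) = A_{n-1}(z) ... A_0(z).  From {alpha_k, abar_k} = -i rho_k^2 one
   computes that a single step satisfies the classical r-matrix relation
     (z - w) {A(z) (x), A(w)} = [r(z, w), A(z) (x) A(w)],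
     r(z, w) = i w (E00 (x) E11 - E01 (x) E10) + i z (E11 (x) E00 - E10 (x) E01),
   and the Leibniz rule shows that the relation passes to products of Poisson-commuting
   factors.  As A_k only involves the k-th coordinate, T_n satisfies it too, and the six
   identities are read off from its entries. *)

Section PoissonBracket.
Variables (C : numClosedFieldType) (n : nat).
Local Notation M := {mpoly C[n + n]}.
Implicit Types (f g h : M) (c : C).

Lemma pbracketDl f g h : pbracket (f + g) h = pbracket f h + pbracket g h.
Proof. by rewrite /pbracket -big_split; apply: eq_bigr => j _ /=; rewrite !mderivD; ring. Qed.

Lemma pbracketDr f g h : pbracket f (g + h) = pbracket f g + pbracket f h.
Proof. by rewrite /pbracket -big_split; apply: eq_bigr => j _ /=; rewrite !mderivD; ring. Qed.

Lemma pbracketNl f g : pbracket (- f) g = - pbracket f g.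
Proof. by rewrite /pbracket -sumrN; apply: eq_bigr => j _ /=; rewrite !mderivN; ring. Qed.

Lemma pbracketNr f g : pbracket f (- g) = - pbracket f g.
Proof. by rewrite /pbracket -sumrN; apply: eq_bigr => j _ /=; rewrite !mderivN; ring. Qed.

Lemma pbracketMl f g h : pbracket (f * g) h = f * pbracket g h + g * pbracket f h.
Proof.
by rewrite /pbracket !mulr_sumr -big_split; apply: eq_bigr => j _ /=; rewrite !mderivM; ring.
Qed.

Lemma pbracketMr f g h : pbracket f (g * h) = g * pbracket f h + h * pbracket f g.
Proof.
by rewrite /pbracket !mulr_sumr -big_split; apply: eq_bigr => j _ /=; rewrite !mderivM; ring.
Qed.

Lemma pbracketCl c g : pbracket c%:MP g = 0.
Proof. by rewrite /pbracket big1 // => j _; rewrite !mderivC; ring. Qed.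

Lemma pbracketCr c f : pbracket f c%:MP = 0.
Proof. by rewrite /pbracket big1 // => j _; rewrite !mderivC; ring. Qed.

Lemma pbracket1l g : pbracket 1 g = 0.
Proof. by rewrite -mpolyC1 pbracketCl. Qed.

Lemma pbracket1r f : pbracket f 1 = 0.
Proof. by rewrite -mpolyC1 pbracketCr. Qed.

Lemma pbracket0l g : pbracket 0 g = 0.
Proof. by rewrite -mpolyC0 pbracketCl. Qed.

Lemma pbracket0r f : pbracket f 0 = 0.
Proof. by rewrite -mpolyC0 pbracketCr. Qed.

Lemma pbracket_suml (I : Type) (r : seq I) (P : pred I) (F : I -> M) g :
  pbracket (\sum_(i <- r | P i) F i) g = \sum_(i <- r | P i) pbracket (F i) g.
Proof. by elim/big_rec2: _ => [|i x y _ <-]; rewrite ?pbracket0l ?pbracketDl. Qed.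

Lemma pbracket_sumr (I : Type) (r : seq I) (P : pred I) (F : I -> M) f :
  pbracket f (\sum_(i <- r | P i) F i) = \sum_(i <- r | P i) pbracket f (F i).
Proof. by elim/big_rec2: _ => [|i x y _ <-]; rewrite ?pbracket0r ?pbracketDr. Qed.

Lemma pbracketC f g : pbracket g f = - pbracket f g.
Proof. by rewrite /pbracket -sumrN; apply: eq_bigr => j _; ring. Qed.

Lemma pbracketxx f : pbracket f f = 0.
Proof. by rewrite /pbracket big1 // => j _; ring. Qed.

Definition free_of (j : 'I_n) f :=
  mderiv (lshift n j) f = 0 /\ mderiv (rshift n j) f = 0.

Lemma free_ofC j c : free_of j c%:MP.
Proof. by split; rewrite mderivC. Qed.

Lemma free_ofD j f g : free_of j f -> free_of j g -> free_of j (f + g).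
Proof. by move=> [f1 f2] [g1 g2]; split; rewrite mderivD ?f1 ?f2 ?g1 ?g2 addr0. Qed.

Lemma free_ofN j f : free_of j f -> free_of j (- f).
Proof. by move=> [f1 f2]; split; rewrite mderivN ?f1 ?f2 oppr0. Qed.

Lemma free_ofM j f g : free_of j f -> free_of j g -> free_of j (f * g).
Proof.
by move=> [f1 f2] [g1 g2]; split; rewrite mderivM ?f1 ?f2 ?g1 ?g2 mul0r mulr0 addr0.
Qed.

Lemma free_of_sum j (I : Type) (r : seq I) (P : pred I) (F : I -> M) :
  (forall i, P i -> free_of j (F i)) -> free_of j (\sum_(i <- r | P i) F i).
Proof. by apply: big_ind; [rewrite -mpolyC0; apply: free_ofC | apply: free_ofD]. Qed.

Lemma mderivXi (i k : 'I_(n + n)) : mderiv i ('X_k : M) = (k == i)%:R.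
Proof.
rewrite mderivX mnm1E; case: eqP => [->|_]; last by rewrite scale0r.
rewrite (_ : U_(i) - U_(i) = 0)%MM ?mpolyX0 ?scale1r //.
by apply/mnmP => l; rewrite !mnmE subnn.
Qed.

Lemma free_of_alpha (j k : 'I_n) : j != k -> free_of j (alpha C k).
Proof.
by move=> jk; split; rewrite mderivXi ?eq_lshift ?eq_lrshift // eq_sym (negbTE jk).
Qed.

Lemma free_of_alphabar (j k : 'I_n) : j != k -> free_of j (alphabar C k).
Proof.
by move=> jk; split; rewrite mderivXi ?eq_rshift ?eq_rlshift // eq_sym (negbTE jk).
Qed.

Lemma pbracket_free f g : (forall j, free_of j f \/ free_of j g) -> pbracket f g = 0.
Proof.
by move=> fg; rewrite /pbracket big1 // => j _; case: (fg j) => [[-> ->]|[-> ->]]; ring.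
Qed.

Lemma pbracket_alpha_alphabar (k : 'I_n) :
  pbracket (alpha C k) (alphabar C k) = - ('i%:MP * rho2 C k).
Proof.
rewrite /pbracket (bigD1 k) //= big1 => [|j jk]; last first.
  by have [-> ->] := free_of_alpha jk; ring.
rewrite !mderivXi eq_lshift eq_rshift eq_lrshift eq_rlshift eqxx /=; ring.
Qed.

Lemma pbracket_alphabar_alpha (k : 'I_n) :
  pbracket (alphabar C k) (alpha C k) = 'i%:MP * rho2 C k.
Proof. by rewrite pbracketC pbracket_alpha_alphabar opprK. Qed.

End PoissonBracket.

Section Conjugation.
Variables (C : numClosedFieldType) (n : nat).
Local Notation M := {mpoly C[n + n]}.

Definition conjMP : {rmorphism C -> M} := (@mpolyC (n + n) C \o Num.conj)%FUN.

HB.instance Definition _ := GRing.RMorphism.copy (@mconj C n)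
  (mmap conjMP (fun i => 'X_(swap_idx i))).

Lemma mconjC (c : C) : mconj (c%:MP : M) = (Num.conj c)%:MP.
Proof. exact: (mmapC _ conjMP). Qed.

Lemma mconjX (i : 'I_(n + n)) : mconj ('X_i : M) = 'X_(swap_idx i).
Proof. exact: (etrans (mmapX _ conjMP _) (mmap1U _ _)). Qed.

Lemma split_lshift (j : 'I_n) : split (lshift n j) = inl j.
Proof. exact: (unsplitK (inl _ j)). Qed.

Lemma split_rshift (j : 'I_n) : split (rshift n j) = inr j.
Proof. exact: (unsplitK (inr _ j)). Qed.

Lemma swap_idxK : involutive (@swap_idx n).
Proof.
move=> i; rewrite -[i]splitK /swap_idx.
by case: (split i) => j /=; rewrite ?split_lshift ?split_rshift /= ?split_lshift ?split_rshift.
Qed.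

Lemma mconjK (p : M) : mconj (mconj p) = p.
Proof.
elim/mpolyind: p => [|c m p _ _ IH]; first by rewrite !rmorph0.
rewrite !rmorphD /= IH -!mul_mpolyC !rmorphM /= !mconjC conjCK; congr (_ * _ + _).
rewrite mpolyXE_id !rmorph_prod /=; apply: eq_bigr => i _.
by rewrite !rmorphXn /= !mconjX swap_idxK.
Qed.

Lemma mconj_alphabar (j : 'I_n) : mconj (alphabar C j) = alpha C j.
Proof. by rewrite mconjX /swap_idx split_rshift. Qed.

End Conjugation.

Lemma sum_ord2 (R : nmodType) (F : 'I_2 -> R) : \sum_(i < 2) F i = F 0 + F 1.
Proof. by rewrite big_ord_recl big_ord1; congr (_ + F _); apply: val_inj. Qed.

Section Szego.
Variables (C : numClosedFieldType) (n : nat).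
Local Notation M := {mpoly C[n + n]}.

Lemma size_opuc (s : C) k : (size (opuc n s k) <= k.+1)%N.
Proof.
elim: k => [|k IH] /=; first by rewrite size_poly1.
apply/leq_sizeP => j hj; rewrite coefB coefXM coefCM coef_poly.
case: j hj => [//|j] hj /=; rewrite ltnNge (ltnW hj) /= mulr0 subr0.
by move/leq_sizeP: IH; apply.
Qed.

Lemma revstarS k (p : {poly M}) (c : M) : (size p <= k.+1)%N ->
  revstar k.+1 ('X * p - c%:P * revstar k p) = revstar k p - (mconj c)%:P * ('X * p).
Proof.
move=> sp; apply/polyP => i.
rewrite /revstar !(coef_poly, coefB, coefCM, coefXM).
case: (ltngtP i k.+1) => [ilt|igt|->].
- rewrite ltnS in ilt; rewrite ltnS (leq_trans ilt) //.
  case: i ilt => [|i] ilt /=; first by rewrite !subn0 ltnn /= !mulr0 !subr0.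
  rewrite (_ : k.+1 - i.+1 = (k - i.+1).+1)%N /=; last by lia.
  rewrite (_ : (k - i.+1).+1 < k.+1)%N; last by lia.
  by rewrite (_ : k - (k - i.+1).+1 = i)%N ?rmorphB ?rmorphM /= ?mconjK //; lia.
- rewrite ltnNge igt /=; case: i igt => [//|i] igt /=.
  by move/leq_sizeP: sp => ->; rewrite ?mulr0 ?subr0 // -ltnS.
- by rewrite ltnSn subnn /= subn0 !sub0r rmorphN rmorphM /= mconjK.
Qed.

Definition szego_mx (k : nat) (z : C) : 'M[M]_2 :=
  \matrix_(a, b) match nat_of_ord a, nat_of_ord b with
                 | 0, 0 => z%:MP
                 | 0, _ => - alphabar_nat C n k
                 | _, 0 => - (mconj (alphabar_nat C n k) * z%:MP)
                 | _, _ => 1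
                 end.

Fixpoint transfer_mx (k : nat) (z : C) : 'M[M]_2 :=
  if k is k'.+1 then szego_mx k' z *m transfer_mx k' z else 1%:M.

Lemma ev_opucS s k z : ev (opuc n s k.+1) z =
  z%:MP * ev (opuc n s k) z - s%:MP * alphabar_nat C n k * ev (revstar k (opuc n s k)) z.
Proof. by rewrite /ev /= hornerD hornerN !hornerM hornerX hornerC. Qed.

Lemma ev_revstar_opucS s k z : ev (revstar k.+1 (opuc n s k.+1)) z =
  ev (revstar k (opuc n s k)) z
  - (Num.conj s)%:MP * mconj (alphabar_nat C n k) * z%:MP * ev (opuc n s k) z.
Proof.
rewrite /= revstarS ?size_opuc // /ev hornerD hornerN !hornerM hornerX hornerC.
by rewrite rmorphM /= mconjC mulrA.
Qed.

Lemma opuc_transfer k z :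
  [/\ ev (Phi C n k) z = transfer_mx k z 0 0 + transfer_mx k z 0 1,
      ev (Phistar C n k) z = transfer_mx k z 1 0 + transfer_mx k z 1 1,
      ev (Psi C n k) z = transfer_mx k z 0 0 - transfer_mx k z 0 1
    & ev (Psistar C n k) z = transfer_mx k z 1 1 - transfer_mx k z 1 0].
Proof.
elim: k => [|k [IHphi IHphis IHpsi IHpsis]].
  have revstar01 : revstar 0 (1 : {poly M}) = 1.
    apply/polyP => -[|i]; rewrite coef_poly coef1 //=; last by rewrite coef1.
    exact: rmorph1.
  by rewrite /Phistar /Psistar /Phi /Psi /= revstar01 /ev hornerC !mxE /=; split; ring.
rewrite /Phistar /Psistar /Phi /Psi in IHphi IHphis IHpsi IHpsis *.
rewrite !ev_opucS !ev_revstar_opucS IHphi IHphis IHpsi IHpsis /=.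
rewrite !mxE !sum_ord2 !mxE /= rmorph1 rmorphN1.
by split; ring.
Qed.

End Szego.

Section TensorBracket.
Variables (C : numClosedFieldType) (n m : nat).
Local Notation M := {mpoly C[n + n]}.
Implicit Types (A B X Y : 'M[M]_m).

Definition pbracket_mx X Y : 'M[M]_(m * m) :=
  \matrix_(i, j) pbracket (X (mxtens_unindex i).1 (mxtens_unindex j).1)
                          (Y (mxtens_unindex i).2 (mxtens_unindex j).2).

Lemma pbracket_mxE X Y a a' b b' :
  pbracket_mx X Y (mxtens_index (a, a')) (mxtens_index (b, b')) = pbracket (X a b) (Y a' b').
Proof. by rewrite mxE !mxtens_indexK. Qed.

Lemma sum_mxtens (F : 'I_(m * m) -> M) :
  \sum_i F i = \sum_(e < m) \sum_(f < m) F (mxtens_index (e, f)).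
Proof.
rewrite pair_big /= (reindex (@mxtens_index m m)) /=; last first.
  by exists (@mxtens_unindex m m) => i _; rewrite (mxtens_indexK, mxtens_unindexK).
by apply: eq_bigr => -[e f].
Qed.

Lemma tensmx11 : 1%:M *t 1%:M = 1%:M :> 'M[M]_(m * m).
Proof.
apply/matrixP => i j; case: (mxtens_indexP i) => a a'; case: (mxtens_indexP j) => b b'.
by rewrite tensmxE !mxE (inj_eq (can_inj (@mxtens_indexK m m))) xpair_eqE -natrM mulnb.
Qed.

Lemma pbracket_mx_mul A B X Y :
  (forall a b a' b', pbracket (A a b) (Y a' b') = 0) ->
  (forall a b a' b', pbracket (X a b) (B a' b') = 0) ->
  pbracket_mx (A *m X) (B *m Y) =
    (A *t B) *m pbracket_mx X Y + pbracket_mx A B *m (X *t Y).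
Proof.
move=> AY XB; apply/matrixP => i j.
case: (mxtens_indexP i) => a a'; case: (mxtens_indexP j) => b b'.
rewrite pbracket_mxE [RHS]mxE !mxE !sum_mxtens -big_split pbracket_suml /=.
apply: eq_bigr => e _; rewrite pbracket_sumr -big_split /=; apply: eq_bigr => f _ /=.
rewrite !tensmxE !pbracket_mxE pbracketMl !pbracketMr AY XB; ring.
Qed.

Definition r_bracket (c : M) (r : 'M[M]_(m * m)) X Y :=
  c *: pbracket_mx X Y = r *m (X *t Y) - (X *t Y) *m r.

Lemma r_bracket1 (c : M) (r : 'M[M]_(m * m)) : r_bracket c r 1%:M 1%:M.
Proof.
rewrite /r_bracket tensmx11 mulmx1 mul1mx subrr (_ : pbracket_mx _ _ = 0) ?scaler0 //.
apply/matrixP => i j; rewrite !mxE.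
by case: (_ == _) => /=; [exact: pbracket1l | exact: pbracket0l].
Qed.

Lemma r_bracket_mul (c : M) (r : 'M[M]_(m * m)) A B X Y :
  (forall a b a' b', pbracket (A a b) (Y a' b') = 0) ->
  (forall a b a' b', pbracket (X a b) (B a' b') = 0) ->
  r_bracket c r A B -> r_bracket c r X Y -> r_bracket c r (A *m X) (B *m Y).
Proof.
move=> AY XB hA hX; have LK : (A *m X) *t (B *m Y) = (A *t B) *m (X *t Y).
  by rewrite tensmx_mul.
rewrite /r_bracket (pbracket_mx_mul AY XB) scalerDr scalemxAr scalemxAl hA hX LK.
(* [done] would compare the two sides through costly unfoldings of the products. *)
by rewrite mulmxBr mulmxBl !mulmxA addrC addrA subrK; reflexivity.
Qed.

End TensorBracket.

Section SzegoRMatrix.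
Variables (C : numClosedFieldType) (n : nat).
Local Notation M := {mpoly C[n + n]}.

(* The coefficient of E_ae (x) E_a'f in r(z, w); [mxtens_index] identifies the pair of
   indices (a, a') with an index of 'I_(2 * 2). *)
Definition szego_r_entry (z w : C) (a a' e f : 'I_2) : M :=
  match nat_of_ord a, nat_of_ord a', nat_of_ord e, nat_of_ord f with
  | 0, 1, 0, 1 => ('i * w)%:MP
  | 0, 1, 1, 0 => - ('i * w)%:MP
  | 1, 0, 1, 0 => ('i * z)%:MP
  | 1, 0, 0, 1 => - ('i * z)%:MP
  | _, _, _, _ => 0
  end.

Definition szego_r (z w : C) : 'M[M]_(2 * 2) :=
  \matrix_(i, j) szego_r_entry z w (mxtens_unindex i).1 (mxtens_unindex i).2
                                  (mxtens_unindex j).1 (mxtens_unindex j).2.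

Lemma szego_rE z w a a' e f :
  szego_r z w (mxtens_index (a, a')) (mxtens_index (e, f)) = szego_r_entry z w a a' e f.
Proof. by rewrite mxE !mxtens_indexK. Qed.

Lemma alphabar_natE k (hk : (k < n)%N) : alphabar_nat C n k = alphabar C (Ordinal hk).
Proof.
rewrite /alphabar_nat; case: insubP => [j _ jk|]; last by rewrite hk.
by congr alphabar; apply: val_inj.
Qed.

Lemma r_bracket_szego k (z w : C) : (k < n)%N ->
  r_bracket (z - w)%:MP (szego_r z w) (szego_mx n k z) (szego_mx n k w).
Proof.
move=> hk; apply/matrixP => i j.
case: (mxtens_indexP i) => a a'; case: (mxtens_indexP j) => b b'.
rewrite mxE pbracket_mxE [RHS]mxE !mxE !sum_mxtens !sum_ord2.
rewrite !tensmxE !szego_rE !mxE.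
rewrite (alphabar_natE hk) mconj_alphabar.
move: a a' b b'; do 4!case=> -[|[|//]] ?; rewrite /szego_r_entry /=.
all: rewrite ?(pbracketNl, pbracketNr, pbracketMl, pbracketMr, pbracketCl, pbracketCr,
  pbracket1l, pbracket1r, pbracketxx, pbracket_alpha_alphabar, pbracket_alphabar_alpha).
all: rewrite /rho2; ring.
Qed.

Lemma free_of_alphabar_nat (j : 'I_n) (k : nat) : (j : nat) != k ->
  free_of j (alphabar_nat C n k) /\ free_of j (mconj (alphabar_nat C n k)).
Proof.
rewrite /alphabar_nat; case: insubP => [k' _ <- jk|_ _].
  rewrite val_eqE in jk; rewrite mconj_alphabar.
  by split; [apply: free_of_alphabar | apply: free_of_alpha].
by rewrite rmorph0 /= -mpolyC0; split; apply: free_ofC.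
Qed.

Lemma free_of_szego_mx (j : 'I_n) k (z : C) a b :
  (j : nat) != k -> free_of j (szego_mx n k z a b).
Proof.
move=> /free_of_alphabar_nat [h1 h2]; rewrite mxE -mpolyC1.
case: (nat_of_ord a) (nat_of_ord b) => [|?] [|?];
  do ?[exact: h1 | exact: h2 | apply: free_ofN | apply: free_ofM | apply: free_ofC].
Qed.

Lemma free_of_transfer_mx (j : 'I_n) k (z : C) a b :
  (k <= j)%N -> free_of j (transfer_mx n k z a b).
Proof.
elim: k a b => [|k IH] a b hk /=; first by rewrite mxE -mpolyC_nat; apply: free_ofC.
rewrite mxE; apply: free_of_sum => e _; apply: free_ofM.
  by apply: free_of_szego_mx; rewrite neq_ltn hk orbT.
exact: IH (ltnW hk).
Qed.

Lemma r_bracket_transfer k (z w : C) : (k <= n)%N ->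
  r_bracket (z - w)%:MP (szego_r z w) (transfer_mx n k z) (transfer_mx n k w).
Proof.
elim: k => [|k IH] hk; first exact: r_bracket1.
have local (u v : C) a b a' b' : pbracket (szego_mx n k u a b) (transfer_mx n k v a' b') = 0.
  apply: pbracket_free => j; have [jk|jk] := eqVneq (j : nat) k.
    by right; apply: free_of_transfer_mx; rewrite jk.
  by left; apply: free_of_szego_mx.
apply: r_bracket_mul => [a b a' b'|a b a' b'||]; first exact: local.
- by rewrite pbracketC local oppr0.
- exact: r_bracket_szego.
- exact: IH (ltnW hk).
Qed.

Lemma transfer_bracket (z w : C) a b a' b' :
  (z - w)%:MP * pbracket (transfer_mx n n z a b) (transfer_mx n n w a' b') =
  \sum_(e < 2) \sum_(f < 2)
    (szego_r_entry z w a a' e f * transfer_mx n n z e b * transfer_mx n n w f b'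
     - transfer_mx n n z a e * transfer_mx n n w a' f * szego_r_entry z w e f b b').
Proof.
move: (r_bracket_transfer z w (leqnn n)) => /matrixP /(_ (mxtens_index (a, a'))).
move=> /(_ (mxtens_index (b, b'))); rewrite mxE pbracket_mxE [RHS]mxE !mxE !sum_mxtens => ->.
rewrite -sumrB; apply: eq_bigr => e _; rewrite -sumrB; apply: eq_bigr => f _.
by rewrite !tensmxE !szego_rE !mulrA.
Qed.

End SzegoRMatrix.

Lemma mul_mpolyC_divD (F : fieldType) (n : nat) (c d : F) (p q : {mpoly F[n]}) :
  d != 0 -> d%:MP * ((c / d)%:MP * p + q) = c%:MP * p + d%:MP * q.
Proof. by move=> d0; rewrite mulrDr mulrA -rmorphM mulrCA divff // mulr1. Qed.

Theorem theorem13p4 (C : numClosedFieldType) (n : nat) (hn : (0 < n)%N) (z w : C) :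
  [/\ pbracket (ev (Phi C n n) z) (ev (Phi C n n) w) = 0,
      pbracket (ev (Psi C n n) z) (ev (Psi C n n) w) = 0,
      pbracket (ev (Phistar C n n) z) (ev (Phistar C n n) w) = 0
    & pbracket (ev (Psistar C n n) z) (ev (Psistar C n n) w) = 0] /\
  (z != w ->
     pbracket (ev (Phistar C n n) z) (ev (Psistar C n n) w) =
        (- ('i / 2))%:MP *
          (((z + w) / (z - w))%:MP *
             (ev (Phistar C n n) z * ev (Psistar C n n) w
              - ev (Psistar C n n) z * ev (Phistar C n n) w)
           - ev (Phistar C n n) z * ev (Phistar C n n) w
           + ev (Psistar C n n) z * ev (Psistar C n n) w)
     /\
     pbracket (ev (Phi C n n) z) (ev (Psi C n n) w) =
        (- ('i / 2))%:MP *
          (((z + w) / (z - w))%:MP *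
             (ev (Phi C n n) z * ev (Psi C n n) w
              - ev (Psi C n n) z * ev (Phi C n n) w)
           + ev (Phi C n n) z * ev (Phi C n n) w
           - ev (Psi C n n) z * ev (Psi C n n) w)).
Proof.
have [<-|zw] := eqVneq z w; first by split; [split; exact: pbracketxx | ].
have zw0 : z - w != 0 by rewrite subr_eq0.
have zwMP : (z - w)%:MP != 0 :> {mpoly C[n + n]} by rewrite mpolyC_eq0.
have [-> -> -> ->] := opuc_transfer n n z; have [-> -> -> ->] := opuc_transfer n n w.
set h := 'i / 2.
split; [split | move=> _; split; rewrite -[in RHS]addrA]; apply: (mulfI zwMP).
1-4: rewrite mulr0.
5-6: rewrite [in RHS]mulrCA (mul_mpolyC_divD _ _ _ zw0).
all: set rhs := (X in _ = X); rewrite !(pbracketDl, pbracketDr, pbracketNl, pbracketNr).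
all: rewrite !(mulrDr, mulrN) !transfer_bracket !sum_ord2 /szego_r_entry /=.
all: by rewrite (splitr 'i) -/h /rhs; ring.
Qed.
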